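(* For every $n$, there are finite alphabets $\Sigma_I,\Sigma_O$ and a finitary parity automaton $\mathcal{A}_n$ over $\Sigma_I\times\Sigma_O$ with $O(n)$ states such that, for every delay function $f$, Player $O$ wins $\Gamma_f(L(\mathcal{A}_n))$ if, and only if, $f(0)\ge 2^n+1$. Furthermore, for every such $f$ (i.e., with $f(0)\ge 2^n+1$), the cost of an optimal winning strategy for Player $O$ in $\Gamma_f(L(\mathcal{A}_n))$ is $2^n+1$.
   Context: A parity automaton with costs is a tuple $\mathcal{A}=(Q,\Sigma,q_I,\delta,\Omega,\mathrm{Cst})$ with a finite set $Q$ of states, a finite alphabet $\Sigma$, an initial state $q_I$, a deterministic complete transition function $\delta\colon Q\times\Sigma\to Q$, a coloring $\Omega\colon Q\to\mathbb{N}$ (with $\Omega(Q)$ containing both an even and an odd color), and a cost function $\mathrm{Cst}$ assigning to every transition $(q,a,\delta(q,a))$ either $\epsilon$ or $\mathtt{i}$ (increment-transition). It is a finitary parity automaton if every transition is an increment-transition. The run on $a_0a_1\cdots$ is $(q_0,a_0,q_1)(q_1,a_1,q_2)\cdots$ with $q_0=q_I$, $q_{j+1}=\delta(q_j,a_j)$; the cost of a finite run is its number of increment-transitions. For odd $c$, $\mathrm{Ans}(c)=\{c'\in\Omega(Q)\mid c'>c,\ c'\text{ even}\}$. For an infinite run $\rho$ and $n$, $\mathrm{Cor}(\rho,n)=0$ if $\Omega(q_n)$ is even, and otherwise it is the minimal cost of $(q_n,a_n,q_{n+1})\cdots(q_{n'-1},a_{n'-1},q_{n'})$ over $n'>n$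 with $\Omega(q_{n'})\in\mathrm{Ans}(\Omega(q_n))$ ($\min\emptyset=\infty$). The run is accepting if $\limsup_n\mathrm{Cor}(\rho,n)<\infty$; $L(\mathcal{A})$ is the set of infinite words whose run is accepting. A delay function is a map $f\colon\mathbb{N}\to\mathbb{N}\setminus\{0\}$. For $L\subseteq(\Sigma_I\times\Sigma_O)^\omega$, the delay game $\Gamma_f(L)$ is played in rounds $i=0,1,2,\ldots$: in round $i$, Player $I$ picks $u_i\in\Sigma_I^{f(i)}$, then Player $O$ picks $v_i\in\Sigma_O$. Player $O$ wins the play if the outcome, i.e., the word over $\Sigma_I\times\Sigma_O$ pairing $\alpha=u_0u_1u_2\cdots$ and $\beta=v_0v_1v_2\cdots$ letterwise, is in $L$; otherwise Player $I$ wins. A strategy for Player $I$ is a map $\tau_I\colon\Sigma_O^*\to\Sigma_I^*$ with $|\tau_I(w)|=f(|w|)$; a strategy for Player $O$ is a map $\tau_O\colon\Sigma_I^*\to\Sigma_O$. A play is consistent with $\tau_I$ if $u_i=\tau_I(v_0\cdots v_{i-1})$ for all $i$, and with $\tau_O$ if $v_i=\tau_O(u_0\cdots u_i)$ for all $i$. A strategy is winning if every consistent play is won by its owner; a player wins the game if she has a winning strategy. For a winning strategy $\tau_O$ of Player $O$ in $\Gamma_f(L(\mathcal{A}))$, its cost is $\mathrm{Cst}_\mathcal{A}(\tau_O)=\sup_w\limsup_{n\to\infty}\mathrm{Cor}(\rho(w),n)$, where $w$ ranges over outcomes of plays consistent with $\tau_O$ and $\rho(w)$ is the run of $\mathcal{A}$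 on $w$; a winning strategy is optimal if it has minimal cost among all winning strategies of Player $O$ in $\Gamma_f(L(\mathcal{A}))$. *)

From mathcomp Require Import all_boot.
Set Implicit Arguments. Unset Strict Implicit. Unset Printing Implicit Defensive.

(* Parity automaton with costs over alphabet Sigma.
   [pca_cst q a = true] means the transition (q,a,delta q a) is an
   increment-transition, [false] means it is an epsilon-transition. *)
Record pca (Sigma : finType) := PCA {
  pca_st : finType;
  pca_init : pca_st;
  pca_delta : pca_st -> Sigma -> pca_st;
  pca_col : pca_st -> nat;
  pca_cst : pca_st -> Sigma -> bool;
  pca_has_even : exists q, ~~ odd (pca_col q);
  pca_has_odd : exists q, odd (pca_col q)
}.
Arguments pca_st {Sigma} p.
Arguments pca_init {Sigma} p.
Arguments pca_delta {Sigma} p _ _.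
Arguments pca_col {Sigma} p _.
Arguments pca_cst {Sigma} p _ _.

Section Auto.
Variables (Sigma : finType) (A : pca Sigma).

Definition finitary : Prop := forall q a, pca_cst A q a = true.

Fixpoint run (w : nat -> Sigma) (j : nat) : pca_st A :=
  match j with
  | 0 => pca_init A
  | j'.+1 => pca_delta A (run w j') (w j')
  end.

Definition seg_cost (w : nat -> Sigma) (n n' : nat) : nat :=
  \sum_(n <= j < n') (pca_cst A (run w j) (w j) : nat).

Definition answers (c c' : nat) : bool := odd c && ~~ odd c' && (c < c').

(* Cor_le w n k  <->  Cor(rho(w), n) <= k  (Cor is a min over answers,
   with min of the empty set = infinity, and 0 when the color is even). *)
Definition Cor_le (w : nat -> Sigma) (n k : nat) : Prop :=
  ~~ odd (pca_col A (run w n)) \/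
  exists n', n < n' /\ answers (pca_col A (run w n)) (pca_col A (run w n'))
             /\ seg_cost w n n' <= k.

Definition limsup_Cor_le (w : nat -> Sigma) (k : nat) : Prop :=
  exists N, forall n, N <= n -> Cor_le w n k.

(* w in L(A) iff limsup_n Cor(rho(w),n) < oo *)
Definition accepts (w : nat -> Sigma) : Prop := exists k, limsup_Cor_le w k.

End Auto.

Definition delay_fun (f : nat -> nat) : Prop := forall i, 0 < f i.

Section Game.
Variables (SI SO : finType) (f : nat -> nat).

Definition strategyO := seq SI -> SO.

Definition blk_end (i : nat) : nat := \sum_(j < i.+1) f j.

(* Outcome of the play in which Player I's letters form alpha = u_0 u_1 ...
   (with |u_i| = f i) and Player O plays v_i = tau (u_0 ... u_i). *)
Definition outcome (tau : strategyO) (alpha : nat -> SI) : nat -> (SI * SO)%type :=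
  fun i => (alpha i, tau (mkseq alpha (blk_end i))).

Definition winningO (L : (nat -> (SI * SO)%type) -> Prop) (tau : strategyO) : Prop :=
  forall alpha, L (outcome tau alpha).

Definition O_wins (L : (nat -> (SI * SO)%type) -> Prop) : Prop :=
  exists tau, winningO L tau.

Definition strat_cost_le (A : pca (SI * SO)%type) (tau : strategyO) (k : nat) : Prop :=
  forall alpha, limsup_Cor_le A (outcome tau alpha) k.

Definition optimal_cost (A : pca (SI * SO)%type) (k : nat) : Prop :=
  (exists tau, winningO (accepts A) tau /\ strat_cost_le A tau k /\
               forall j, strat_cost_le A tau j -> k <= j) /\
  (forall tau j, winningO (accepts A) tau -> strat_cost_le A tau j -> k <= j).

End Game.

From mathcomp Require Import all_boot zify.
Set Implicit Arguments. Unset Strict Implicit. Unset Printing Implicit Defensive.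

(* Player I writes letters 0 .. n+1 (with a flag bit) and every answer j of Player O
   starts a tracker for j, which stops as soon as j occurs twice with no larger letter
   in between, or once if j >= n; after a stop the automaton waits, in its only even
   state, for the next flagged position, which starts a new tracker.  Reading bit j < n
   as "j occurred since the last larger letter", every letter that stops no tracker
   increments the resulting binary counter, so any 2^n consecutive letters stop some
   tracker, while the ruler word 0 1 0 2 0 1 0 ... of length 2^n - 1 stops none.
   With lookahead f(0) >= 2^n + 1, Player O names a tracker that stops within the next
   2^n letters, which costs at most 2^n + 1 (one more step reaches the waiting state).
   With less lookahead, Player I plays the ruler word after O's first answer j and then
   a letter other than j forever.  Repeating the ruler word with a flag every 2^n + 1
   positions forces cost 2^n + 1 on every winning strategy. *)

Section Tracker.
Variable n : nat.

Definition track (j : nat) (b : bool) (a : nat) : option bool :=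
  if a == j then (if b || (n <= j) then None else Some true)
  else Some (b && (a < j)).

Fixpoint tracks (j : nat) (b : bool) (s : seq nat) : option bool :=
  if s is a :: s' then obind (tracks j ^~ s') (track j b a) else Some b.

Lemma tracks_cat j b s1 s2 :
  tracks j b (s1 ++ s2) = obind (tracks j ^~ s2) (tracks j b s1).
Proof. by elim: s1 b => //= a s1 IH b; case: track. Qed.

Lemma tracks_rcons j b s a :
  tracks j b (rcons s a) = obind (track j ^~ a) (tracks j b s).
Proof. by rewrite -cats1 tracks_cat; case: tracks => //= b'; case: track. Qed.

Lemma tracks_take j b s k : tracks j b s != None -> tracks j b (take k s) != None.
Proof. by rewrite -{1}(cat_take_drop k s) tracks_cat; case: tracks. Qed.

Lemma tracks_small j b s : all (ltn^~ j) s -> tracks j b s = Some b.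
Proof.
elim: s => //= a s IH /andP[lt_aj small_s].
by rewrite /track ltn_eqF // lt_aj andbT /= IH.
Qed.

Lemma tracks_nseq j b m a : a != j -> tracks j b (nseq m a) != None.
Proof. move=> /negbTE neq_aj; by elim: m b => //= m IH b; rewrite /track neq_aj /=. Qed.

Lemma mem_tracks_None j b s : tracks j b s = None -> j \in s.
Proof.
elim: s b => //= a s IH b; rewrite in_cons /track.
by case: eqP => [-> | _ /IH ->]; rewrite ?eqxx ?orbT.
Qed.

Fixpoint ruler (m : nat) : seq nat :=
  if m is m'.+1 then ruler m' ++ m' :: ruler m' else [::].

Lemma ruler_lt m j : m <= j -> all (ltn^~ j) (ruler m).
Proof.
elim: m => //= m IH lt_mj; rewrite all_cat /= lt_mj IH ?(ltnW lt_mj) //.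
Qed.

Lemma size_ruler m : size (ruler m) = (2 ^ m).-1.
Proof. elim: m => //= m IH; rewrite size_cat /= IH expnS; have := expn_gt0 2 m; lia. Qed.

Lemma tracks_ruler m j : m <= n -> tracks j false (ruler m) = Some (j < m).
Proof.
elim: m => [|m IH] lt_mn /=; first by rewrite ltn0.
rewrite tracks_cat IH ?(ltnW lt_mn) //= /track.
case: (ltngtP j m) => [lt_jm | lt_mj | ->].
- by rewrite /= IH ?(ltnW lt_mn) // lt_jm ltnW.
- rewrite /= tracks_small; last exact/ruler_lt/ltnW.
  by rewrite ltnS leqNgt lt_mj.
- by rewrite leqNgt lt_mn /= tracks_small ?ltnSn // ruler_lt.
Qed.

Lemma nth_ruler_lt c j : c < n.+2 -> nth c (ruler n) j < n.+2.
Proof.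
move=> lt_c; have [lt_j | ge_j] := ltnP j (size (ruler n)); last by rewrite nth_default.
exact: (allP (ruler_lt (leqW (leqnSn n)))) _ (mem_nth c lt_j).
Qed.

Definition bitsum (m : nat) (x : nat -> bool) : nat := \sum_(i < m) x i * 2 ^ i.

Lemma bitsum_lt m x : bitsum m x < 2 ^ m.
Proof.
elim: m => [|m IH]; first by rewrite /bitsum big_ord0.
by rewrite /bitsum big_ord_recr /= -/(bitsum m x) expnS; case: (x m) => /=; lia.
Qed.

Lemma bitsum_ltn m a (x y : nat -> bool) : a < m -> ~~ x a -> y a ->
  (forall j, a < j < m -> x j = y j) -> bitsum m x < bitsum m y.
Proof.
elim: m => // m IH lt_am xa ya eq_xy.
rewrite /bitsum !big_ord_recr /= -/(bitsum m x) -/(bitsum m y).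
have [lt_am' | eq_am] := ltnP a m.
  rewrite eq_xy ?lt_am' ?ltnSn // ltn_add2r.
  by apply: IH => // j /andP[? ?]; apply: eq_xy; lia.
have {}eq_am : a = m by lia.
by subst a; rewrite (negbTE xa) ya /=; have := bitsum_lt m x; lia.
Qed.

Definition counter (s : seq nat) : nat :=
  bitsum n (fun i => tracks i false s == Some true).

(* Each letter sets the bit of its own tracker and changes only lower bits. *)
Lemma size_le_counter s : (forall j, tracks j false s != None) -> size s <= counter s.
Proof.
elim/last_ind: s => // s a IH total.
have total_s j : tracks j false s != None.
  by apply: contra (total j) => /eqP; rewrite tracks_rcons => ->.
rewrite size_rcons; apply: leq_ltn_trans (IH total_s) _.
have [ba tr_a] : exists ba, tracks a false s = Some ba.
  by case: tracks (total_s a) => // ba _; exists ba.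
have [ba_false lt_an] : ba = false /\ a < n.
  by move: (total a); rewrite tracks_rcons tr_a /= /track eqxx; case: ba {tr_a}; case: leqP.
apply: (bitsum_ltn lt_an); first by rewrite tr_a ba_false.
  by rewrite tracks_rcons tr_a ba_false /= /track eqxx leqNgt lt_an.
move=> j /andP[lt_aj _]; rewrite tracks_rcons.
case: tracks (total_s j) => //= bj _.
by rewrite /track ltn_eqF // lt_aj andbT.
Qed.

Lemma has_tracks_None s : 2 ^ n <= size s -> has (fun j => tracks j false s == None) s.
Proof.
apply: contraLR; rewrite -ltnNge => /hasPn none.
suff total j : tracks j false s != None.
  by apply: leq_ltn_trans (size_le_counter total) (bitsum_lt _ _).
have [/none // | notin] := boolP (j \in s).
by apply: contra notin => /eqP; apply: mem_tracks_None.
Qed.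

End Tracker.

Section GeneralFacts.
Variables (Sigma : finType) (A : pca Sigma) (w : nat -> Sigma).

Lemma runS t : run A w t.+1 = pca_delta A (run A w t) (w t).
Proof. by []. Qed.

Lemma Cor_leW t k k' : k <= k' -> Cor_le A w t k -> Cor_le A w t k'.
Proof.
move=> le_kk' [even | [t' [lt_tt' [ans cost]]]]; first by left.
by right; exists t'; split; last split; last exact: leq_trans le_kk'.
Qed.

Lemma seg_cost_finitary t t' : finitary A -> seg_cost A w t t' = t' - t.
Proof.
move=> fin; rewrite /seg_cost; under eq_bigr do rewrite fin.
by rewrite sum_nat_const_nat muln1.
Qed.

Lemma accepts_even_after : accepts A w ->
  forall t, exists2 t', t <= t' & ~~ odd (pca_col A (run A w t')).
Proof.
move=> [k [N Cor_N]] t; have [|even|[t' [lt_t' [ans _]]]] := Cor_N (maxn N t).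
- exact: leq_maxl.
- by exists (maxn N t); first exact: leq_maxr.
- exists t'; last by case/andP: ans => /andP[].
  by apply: leq_trans (ltnW lt_t'); apply: leq_maxr.
Qed.

End GeneralFacts.

Section Automaton.
Variable n : nat.

Notation letterI := (bool * 'I_n.+2)%type.
Notation letterO := 'I_n.+2.
(* [inl (j, b)] tracks letter j, with b telling whether j occurred since the last
   larger letter. *)
Notation state := ('I_n.+2 * bool + bool)%type.

Definition waiting : state := inr true.
Definition stopped : state := inr false.

Definition step (s : state) (x : letterI * letterO) : state :=
  let: (flag, a, o) := x in
  match s with
  | inl (j, b) => if track n j b a is Some b' then inl (j, b') else stopped
  | inr true => if flag then inl (o, false) else waiting
  | inr false => waiting
  end.

Definition color (s : state) : nat := if s is inr true then 2 else 1.

Lemma color_even s : ~~ odd (color s) -> s = waiting.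
Proof. by case: s => [[]|[]]. Qed.

Lemma color_has_even : exists s, ~~ odd (color s).
Proof. by exists waiting. Qed.

Lemma color_has_odd : exists s, odd (color s).
Proof. by exists stopped. Qed.

Definition aut : pca (letterI * letterO)%type :=
  @PCA _ state waiting step color (fun _ _ => true) color_has_even color_has_odd.

Lemma card_aut : #|pca_st aut| = 2 * n + 6.
Proof. by rewrite /= card_sum card_prod !card_ord card_bool; lia. Qed.

Lemma step_tracking_neq_waiting jb x : step (inl jb) x != waiting.
Proof. by case: jb x => j b [[flag a] o] /=; case: track. Qed.

Section Runs.
Variable w : nat -> letterI * letterO.

Definition letters (t k : nat) : seq nat := [seq val (w i).1.2 | i <- iota t k].

Lemma letters_cat t k1 k2 : letters t (k1 + k2) = letters t k1 ++ letters (t + k1) k2.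
Proof. by rewrite /letters iotaD map_cat. Qed.

Lemma letters_rcons t k : letters t k.+1 = rcons (letters t k) (val (w (t + k)).1.2).
Proof. by rewrite -addn1 letters_cat cats1. Qed.

Lemma letters_take t k m : m <= k -> take m (letters t k) = letters t m.
Proof. by move=> le_mk; rewrite /letters -map_take take_iota (minn_idPl le_mk). Qed.

Lemma run_tracking t j b k b' : run aut w t = inl (j, b) ->
  tracks n j b (letters t k) = Some b' -> run aut w (t + k) = inl (j, b').
Proof.
move=> run_t; elim: k b' => [|k IH] b'; first by rewrite addn0 run_t => -[<-].
rewrite letters_rcons tracks_rcons addnS /=.
case: tracks (IH) => //= b'' /(_ b'' erefl) ->.
by case: (w (t + k)) => [[flag a] o] /=; case: track => // ? [<-].
Qed.

Lemma tracking_Cor_le t j b k : run aut w t = inl (j, b) ->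
  tracks n j b (letters t k) = None -> Cor_le aut w t k.+1.
Proof.
move=> run_t; elim: k => // k IH.
rewrite letters_rcons tracks_rcons; case E: tracks => [b'|] /= stop; last first.
  exact: Cor_leW (IH E).
have run_stopped : run aut w (t + k).+1 = stopped.
  by rewrite /= (run_tracking run_t E); case: (w (t + k)) stop => [[flag a] o] /= ->.
right; exists (t + k).+2; rewrite run_t seg_cost_finitary // runS run_stopped.
by split; [lia | split; [case: (w _) => [[]] | lia]].
Qed.

Lemma tracking_origin t j b : run aut w t = inl (j, b) ->
  exists2 p, p < t & (w p).2 = j /\ tracks n j false (letters p.+1 (t - p.+1)) = Some b.
Proof.
elim: t j b => // t IH j b /=.
case Wt: (w t) => [[flag a] o]; case E: (run aut w t) => [[j' b']|[]] /=.
- case F: track => [b''|] // [<- <-].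
  have [p lt_pt [wp tr]] := IH _ _ E; exists p; first exact: ltnW.
  by split=> //; rewrite subSn // letters_rcons tracks_rcons tr /= subnKC // Wt.
- by case: flag Wt => // Wt [<- <-]; exists t; rewrite ?Wt ?subnn.
- by [].
Qed.

Lemma waiting_until_flag t p0 : run aut w t = waiting -> t <= p0 -> (w p0).1.1 ->
  exists2 p, t <= p & (w p).1.1 /\ run aut w p = waiting.
Proof.
move=> wait_t /subnK <-; move: (p0 - t) => d; elim: d t wait_t => [|d IH] t wait_t flag.
  by exists t.
case flag_t: (w t).1.1; first by exists t.
have wait_t1 : run aut w t.+1 = waiting.
  by rewrite /= wait_t; case: (w t) flag_t => [[[] a] o].
rewrite addSnnS in flag; have [p /ltnW le_tp rest] := IH t.+1 wait_t1 flag.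
by exists p.
Qed.

Lemma tracking_delays_waiting t j b k i : run aut w t = inl (j, b) ->
  tracks n j b (letters t k) != None -> t < i -> run aut w i = waiting -> t + k.+1 < i.
Proof.
move=> run_t total lt_ti wait_i; rewrite ltnNge; apply/negP => le_i.
have [m le_mk eq_i] : exists2 m, m <= k & i = (t + m).+1 by exists (i.-1 - t); lia.
have [b' run_tm] : exists b', run aut w (t + m) = inl (j, b').
  move: (tracks_take m total); rewrite letters_take //.
  by case E: tracks => [b'|] // _; exists b'; apply: run_tracking run_t E.
by move: wait_i; rewrite eq_i /= run_tm => /eqP; apply/negP/step_tracking_neq_waiting.
Qed.

End Runs.
End Automaton.

Section Blocks.
Variable f : nat -> nat.
Hypothesis f_pos : delay_fun f.

Lemma blk_end0 : blk_end f 0 = f 0.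
Proof. by rewrite /blk_end big_ord1. Qed.

Lemma blk_endS i : blk_end f i.+1 = blk_end f i + f i.+1.
Proof. by rewrite /blk_end big_ord_recr. Qed.

Lemma blk_end_ge i : f 0 + i <= blk_end f i.
Proof.
elim: i => [|i IH]; first by rewrite blk_end0 addn0.
by rewrite blk_endS addnS -addn1; apply: leq_add IH (f_pos _).
Qed.

Lemma blk_end_inj : injective (blk_end f).
Proof.
apply/incn_inj/leq_mono/(homo_ltn ltn_trans) => i.
by rewrite blk_endS -{1}(addn0 (blk_end f i)) ltn_add2l; apply: f_pos.
Qed.

Definition round (L : nat) : nat := index L (mkseq (blk_end f) L).

Lemma round_blk_end t : round (blk_end f t) = t.
Proof.
have lt_t : t < blk_end f t.
  by apply: leq_trans (blk_end_ge t); rewrite addnC -{1}(addn0 t) ltn_add2l; apply: f_pos.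
rewrite /round -{1}(nth_mkseq 0 (blk_end f) lt_t).
by rewrite index_uniq ?size_mkseq ?mkseq_uniq //; apply: blk_end_inj.
Qed.

End Blocks.

Section Strategy.
Variables (n : nat) (f : nat -> nat).
Hypotheses (f_pos : delay_fun f) (f0_long : 2 ^ n + 1 <= f 0).

Definition answer (s : seq nat) : 'I_n.+2 :=
  odflt ord0 [pick j : 'I_n.+2 | tracks n j false s == None].

Lemma tracks_answer s : all (ltn^~ n.+2) s -> 2 ^ n <= size s ->
  tracks n (answer s) false s = None.
Proof.
move=> small long; have /hasP[j js /eqP stop] := has_tracks_None long.
rewrite /answer; case: pickP => [k /eqP // | none].
by have := none (Ordinal (allP small j js)); rewrite /= stop eqxx.
Qed.

(* At round p Player O has seen blk_end f p > p + 2^n letters, which covers the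
   window p+1 .. p+2^n read by the tracker that her answer starts. *)
Definition lookahead (s : seq (bool * 'I_n.+2)) : 'I_n.+2 :=
  answer [seq val (nth (false, ord0) s i).2 | i <- iota (round f (size s)).+1 (2 ^ n)].

Lemma lookahead_prefix alpha t : lookahead (mkseq alpha (blk_end f t)) =
  answer [seq val (alpha i).2 | i <- iota t.+1 (2 ^ n)].
Proof.
rewrite /lookahead size_mkseq round_blk_end //; congr answer.
apply/eq_in_map => i; rewrite mem_iota => /andP[_ lt_i].
by rewrite nth_mkseq //; have := blk_end_ge f_pos t; lia.
Qed.

Lemma lookahead_cost alpha :
  limsup_Cor_le (aut n) (outcome f lookahead alpha) (2 ^ n + 1).
Proof.
set w := outcome f lookahead alpha; exists 0 => t _.
case run_t: (run (aut n) w t) => [[j b]|[]].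
- have [p lt_pt [wp tr]] := tracking_origin run_t.
  have stop : tracks n j false (letters w p.+1 (2 ^ n)) = None.
    rewrite -wp /= lookahead_prefix tracks_answer ?size_map ?size_iota //.
    by apply/allP => _ /mapP[i _ ->]; apply: ltn_ord.
  have le_t : t - p.+1 <= 2 ^ n.
    have total : tracks n j false (letters w p.+1 (t - p.+1)) != None by rewrite tr.
    rewrite leqNgt; apply/negP => long.
    by move: (tracks_take (2 ^ n) total); rewrite letters_take 1?ltnW // stop.
  move: stop; rewrite -(subnKC le_t) letters_cat tracks_cat tr /= subnKC //.
  by move/(tracking_Cor_le run_t); apply: Cor_leW; lia.
- by left; rewrite run_t.
- right; exists t.+1; rewrite run_t seg_cost_finitary //=.
  by rewrite run_t subSnn addn1; split=> //; split=> //; case: (alpha t) => [[]].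
Qed.

End Strategy.

Section ShortDelay.
Variable n : nat.

Definition ruler_word (c i : nat) : bool * 'I_n.+2 :=
  (i == 0, inord (if i is i'.+1 then nth c (ruler n) i' else 0)).

Lemma short_delay_loses f tau : f 0 <= 2 ^ n -> ~ winningO f (accepts (aut n)) tau.
Proof.
move=> short win; set j0 := tau (mkseq (ruler_word 0) (f 0)).
set c := if val j0 == 0 then 1 else 0.
have neq_c : c != j0 by rewrite /c; case: (val j0 =P 0) => [-> | /eqP]; rewrite // eq_sym.
set w := outcome f tau (ruler_word c).
have prefix : mkseq (ruler_word c) (blk_end f 0) = mkseq (ruler_word 0) (f 0).
  rewrite blk_end0; apply/eq_in_map => -[|i] //; rewrite mem_iota => /andP[_ lt_i].
  by congr (_, inord _); apply: set_nth_default; rewrite size_ruler; lia.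
have run_1 : run (aut n) w 1 = inl (j0, false) by rewrite /= /w /outcome prefix.
have letters_w k : letters w 1 k = take k (ruler n ++ nseq k c).
  rewrite /letters -[X in iota X _]addn0 iotaDl -map_comp.
  rewrite -(map_nth_iota0 c) ?size_cat ?size_nseq ?leq_addl //.
  apply/eq_in_map => i _ /=; rewrite add0n inordK; last first.
    by apply: nth_ruler_lt; rewrite /c; case: ifP.
  rewrite nth_cat; case: ltnP => // ge_i.
  by rewrite nth_default // nth_nseq; case: ltnP => //; rewrite size_ruler; lia.
have tracking k : exists b, run (aut n) w (1 + k) = inl (j0, b).
  have : tracks n j0 false (letters w 1 k) != None.
    rewrite letters_w; apply: tracks_take.
    by rewrite tracks_cat tracks_ruler //= tracks_nseq.
  by case E: tracks => [b|] // _; exists b; apply: run_tracking run_1 E.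
have [t le_1t even] := accepts_even_after (win (ruler_word c)) 1.
by have [b] := tracking t.-1; rewrite add1n prednK // => run_t; rewrite run_t in even.
Qed.

End ShortDelay.

Section LowerBound.
Variable n : nat.
Local Notation P := (2 ^ n).+1.

Definition periodic_ruler (i : nat) : bool * 'I_n.+2 :=
  (P %| i, inord (nth 0 (ruler n) (i %% P).-1)).

Lemma letters_periodic_ruler f tau p : P %| p ->
  letters (outcome f tau periodic_ruler) p.+1 (2 ^ n).-1 = ruler n.
Proof.
case/dvdnP=> q ->; rewrite -(mkseq_nth 0 (ruler n)) size_ruler.
rewrite /letters -[X in iota X _]addn0 iotaDl -map_comp; apply/eq_in_map => i.
rewrite mem_iota => /andP[_ lt_i] /=.
rewrite addSnnS modnMDl modn_small /=; last by have := expn_gt0 2 n; lia.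
by rewrite inordK // nth_ruler_lt.
Qed.

Lemma cost_lower_bound f tau k : winningO f (accepts (aut n)) tau ->
  strat_cost_le f (aut n) tau k -> 2 ^ n + 1 <= k.
Proof.
move=> win cost; set w := outcome f tau periodic_ruler.
have [N Cor_N] := cost periodic_ruler.
have [t le_Nt /color_even wait_t] := accepts_even_after (win periodic_ruler) N.
have [p le_tp [flag_p wait_p]] :=
  waiting_until_flag wait_t (leq_pmulr t (ltn0Sn _)) (dvdn_mull t (dvdnn P)).
have run_p1 : run (aut n) w p.+1 = inl (tau (mkseq periodic_ruler (blk_end f p)), false).
  by rewrite /= wait_p; move: flag_p; rewrite /w /outcome /= => ->.
have total : tracks n (tau (mkseq periodic_ruler (blk_end f p))) false
    (letters w p.+1 (2 ^ n).-1) != None.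
  by rewrite letters_periodic_ruler // tracks_ruler.
have [|odd_p1|[t' [lt_pt' [ans cost_t']]]] := Cor_N p.+1; first lia.
  by move: odd_p1; rewrite run_p1.
have /color_even wait_t' : ~~ odd (color (run (aut n) w t')) by case/andP: ans => /andP[].
have := tracking_delays_waiting run_p1 total lt_pt' wait_t'.
by move: cost_t'; rewrite seg_cost_finitary //; have := expn_gt0 2 n; lia.
Qed.

End LowerBound.

Theorem proposition1 :
  exists c : nat, forall n : nat,
    exists (SI SO : finType) (A : pca (SI * SO)%type),
      finitary A /\ #|pca_st A| <= c * n.+1 /\
      forall f : nat -> nat, delay_fun f ->
        (O_wins f (accepts A) <-> 2 ^ n + 1 <= f 0) /\
        (2 ^ n + 1 <= f 0 -> optimal_cost f A (2 ^ n + 1)).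
Proof.
exists 6 => n; exists (bool * 'I_n.+2)%type, 'I_n.+2; exists (aut n).
split; first by []; split; first by rewrite card_aut; lia.
move=> f f_pos.
have lookahead_wins : 2 ^ n + 1 <= f 0 -> winningO f (accepts (aut n)) (lookahead f).
  by move=> long alpha; exists (2 ^ n + 1); apply: lookahead_cost.
split.
  split=> [[tau win] | long]; last by exists (lookahead f); apply: lookahead_wins.
  by rewrite leqNgt addn1 ltnS; apply/negP => short; apply: short_delay_loses short win.
move=> long; split=> [|tau j win cost]; last exact: cost_lower_bound win cost.
exists (lookahead f); split; first exact: lookahead_wins.
split=> [alpha | j]; first exact: lookahead_cost.
exact: cost_lower_bound (lookahead_wins long).
Qed.
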